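(* Let $\mathbf{X}=(\mathbf{x}^1,\dots,\mathbf{x}^n)\in\mathbb{R}^{n\times T\times q}$ and $\mathbf{X}'=(\mathbf{x}'^1,\dots,\mathbf{x}'^{n})\in\mathbb{R}^{n\times T'\times q}$ be datasets each composed of $n$ time series, with uniform weights $\mathbf{w}=\mathbf{w}'=(1/n,\dots,1/n)$. Then the MAD problem admits an optimal solution $(\boldsymbol\gamma^\star,\boldsymbol\pi^\star)$ whose transportation plan $\boldsymbol\gamma^\star$ is a one-to-one matching, i.e. $n\boldsymbol\gamma^\star$ is a permutation matrix: each sample of $\mathbf{X}$ is matched to exactly one sample of $\mathbf{X}'$ and conversely. The same holds for the $|\mathcal{C}|$-MAD problem for any labels $\mathbf{Y}\in\mathcal{C}^n$ of $\mathbf{X}$.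
   Context: Here $\mathbf{x}^i_t\in\mathbb{R}^q$ is the $t$-th time step of the $i$-th series. The set of couplings is $\Gamma(\mathbf{w},\mathbf{w}')=\{\boldsymbol\gamma\in\mathbb{R}_{\ge0}^{n\times n}:\boldsymbol\gamma\mathbf{1}=\mathbf{w},\ \boldsymbol\gamma^\top\mathbf{1}=\mathbf{w}'\}$. $\mathcal{A}(T,T')$ is the finite set of admissible DTW alignments. These are binary matrices $\boldsymbol\pi\in\{0,1\}^{T\times T'}$ whose nonzero entries form a path from $(1,1)$ to $(T,T')$ using only steps $(1,0)$, $(0,1)$ or $(1,1)$. The cost tensor is $\mathbf{L}(\mathbf{X},\mathbf{X}')$, with entries $L^{i,j}_{t,t'}=\|\mathbf{x}^i_t-\mathbf{x}'^j_{t'}\|_2^2$. For $\boldsymbol\pi\in\mathbb{R}^{T\times T'}$, $(\mathbf{L}\otimes\boldsymbol\pi)_{ij}=\sum_{t,t'}L^{i,j}_{t,t'}\pi_{tt'}$. The two problems are: - The MAD problem is $\min_{\boldsymbol\gamma\in\Gamma(\mathbf{w},\mathbf{w}'),\ \boldsymbol\pi\in\mathcal{A}(T,T')}\langle\mathbf{L}(\mathbf{X},\mathbf{X}')\otimes\boldsymbol\pi,\boldsymbol\gamma\rangle$, with Frobenius inner product. - Given a finite class set $\mathcal{C}$ and labels $\mathbf{Y}=(y_1,\dots,y_n)\in\mathcal{C}^n$, the $|\mathcal{C}|$-MAD problem is $\min\sum_{i,j}\gamma_{ij}\sum_{t,t'}L^{i,j}_{t,t'}\pi^{(y_i)}_{tt'}$.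 The minimum is over $\boldsymbol\gamma\in\Gamma(\mathbf{w},\mathbf{w}')$ and one alignment $\boldsymbol\pi^{(c)}\in\mathcal{A}(T,T')$ per class $c\in\mathcal{C}$. *)

From HB Require Import structures.
From mathcomp Require Import all_boot all_order all_fingroup all_algebra.
From mathcomp Require Import reals.
Set Implicit Arguments. Unset Strict Implicit. Unset Printing Implicit Defensive.
Import Order.TTheory GRing.Theory Num.Theory.
Local Open Scope ring_scope.

(* Indices are 0-based: time steps 'I_T, series 'I_n, features 'I_q. *)

Definition Lcost (R : realType) (n T T' q : nat)
  (X : 'I_n -> 'I_T -> 'I_q -> R) (X' : 'I_n -> 'I_T' -> 'I_q -> R)
  (i j : 'I_n) (t : 'I_T) (t' : 'I_T') : R :=
  \sum_(k < q) (X i t k - X' j t' k) ^+ 2.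

Definition dtw_step (a b : nat * nat) : bool :=
  [|| (b.1 == a.1.+1) && (b.2 == a.2),
      (b.1 == a.1) && (b.2 == a.2.+1)
    | (b.1 == a.1.+1) && (b.2 == a.2.+1)].

Definition admissible (R : realType) (T T' : nat) (pi : 'M[R]_(T, T')) : Prop :=
  exists p : seq (nat * nat),
    [/\ path dtw_step (0%N, 0%N) p,
        last (0%N, 0%N) p = (T.-1, T'.-1) &
        forall (t : 'I_T) (t' : 'I_T'),
          pi t t' = if (nat_of_ord t, nat_of_ord t') \in (0%N, 0%N) :: p then 1 else 0].

Definition coupling (R : realType) (n : nat) (w w' : 'I_n -> R) (g : 'M[R]_n) : Prop :=
  [/\ forall i j, 0 <= g i j,
      forall i, \sum_(j < n) g i j = w i &
      forall j, \sum_(i < n) g i j = w' j].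

Definition unif (R : realType) (n : nat) : 'I_n -> R := fun _ => n%:R^-1.

Definition mad_cost (R : realType) (n T T' q : nat)
  (X : 'I_n -> 'I_T -> 'I_q -> R) (X' : 'I_n -> 'I_T' -> 'I_q -> R)
  (g : 'M[R]_n) (pi : 'M[R]_(T, T')) : R :=
  \sum_(i < n) \sum_(j < n)
     g i j * (\sum_(t < T) \sum_(t' < T') Lcost X X' i j t t' * pi t t').

(* |C|-MAD objective: one alignment per class, the one of the label of x^i *)
Definition cmad_cost (R : realType) (n T T' q : nat) (C : finType)
  (X : 'I_n -> 'I_T -> 'I_q -> R) (X' : 'I_n -> 'I_T' -> 'I_q -> R)
  (Y : 'I_n -> C) (g : 'M[R]_n) (Pi : C -> 'M[R]_(T, T')) : R :=
  \sum_(i < n) \sum_(j < n)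
     g i j * (\sum_(t < T) \sum_(t' < T') Lcost X X' i j t t' * Pi (Y i) t t').

From HB Require Import structures.
From mathcomp Require Import all_boot all_order all_fingroup all_algebra.
From mathcomp Require Import reals.
From mathcomp Require Import boolp zify lra.
Import Order.TTheory GRing.Theory Num.Theory.
Set Implicit Arguments. Unset Strict Implicit. Unset Printing Implicit Defensive.

(* For fixed alignments the cost is linear in the coupling, and with uniform weights the
   couplings are the bistochastic matrices scaled by 1/n. Hall's marriage theorem yields a
   permutation inside the support of any such matrix; peeling off the corresponding
   permutation matrix (Birkhoff-von Neumann) shows that its cost is at least that of the
   cheapest permutation. As there are finitely many alignments, a joint minimum over
   alignments and permutations is then a global optimum. MAD is |C|-MAD with one class. *)

Section HallMarriage.
Variables (I J : finType) (r : I -> J -> bool).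
Implicit Types (A B C : {set I}) (K M : {set J}) (f g : I -> J).

Definition nbhd (M : {set J}) (B : {set I}) : {set J} :=
  [set j in M | [exists i in B, r i j]].

Definition hall_cond (A : {set I}) (M : {set J}) : Prop :=
  forall B, B \subset A -> #|B| <= #|nbhd M B|.

Definition matching (A : {set I}) (M : {set J}) (f : I -> J) : Prop :=
  {in A &, injective f} /\ {in A, forall i, f i \in M /\ r i (f i)}.

Lemma mem_nbhd M B i j : i \in B -> j \in M -> r i j -> j \in nbhd M B.
Proof. by move=> iB jM rij; rewrite inE jM; apply/existsP; exists i; rewrite iB. Qed.

Lemma nbhd_sub M B : nbhd M B \subset M.
Proof. by apply/subsetP=> j; rewrite inE => /andP[]. Qed.

Lemma nbhdU M B C : nbhd M (B :|: C) = nbhd M B :|: nbhd M C.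
Proof.
apply/setP=> j; rewrite !inE -andb_orr; congr (_ && _).
apply/existsP/orP=> [[i /andP[]]|[]/existsP[i /andP[iX rij]]].
- by rewrite inE => /orP[] iX rij; [left | right]; apply/existsP; exists i; rewrite iX.
- by exists i; rewrite inE iX rij.
- by exists i; rewrite inE iX orbT rij.
Qed.

Lemma nbhdD M K B : nbhd (M :\: K) B = nbhd M B :\: K.
Proof. by apply/setP=> j; rewrite !inE andbA. Qed.

Lemma matching_nbhd B M f : matching B M f -> matching B (nbhd M B) f.
Proof.
case=> injf fB; split=> // i iB; have [fiM rfi] := fB i iB.
by rewrite (mem_nbhd iB).
Qed.

Lemma matching_glue A B M K f g :
  B \subset A -> K \subset M -> matching B K f -> matching (A :\: B) (M :\: K) g ->
  matching A M (fun i => if i \in B then f i else g i).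
Proof.
move=> BA KM [injf fB] [injg gAB].
have gA i : i \in A -> i \notin B -> g i \in M :\: K /\ r i (g i).
  by move=> iA iB; apply: gAB; rewrite inE iB.
split=> [i i' iA i'A | i iA].
- case: ifP => iB; case: ifP => i'B.
  + exact: injf.
  + by move=> eqfg; have [] := gA i' i'A (negbT i'B); rewrite -eqfg inE (fB i iB).1.
  + by move=> eqgf; have [] := gA i iA (negbT iB); rewrite eqgf inE (fB i' i'B).1.
  + by apply: injg; rewrite inE ?iB ?i'B.
- case: ifP => iB; first by have [/(subsetP KM) fiM ->] := fB i iB.
  by have [/setDP[]] := gA i iA (negbT iB).
Qed.

Lemma hall_cond_tight A B M : hall_cond A M -> B \subset A ->
  #|nbhd M B| = #|B| -> hall_cond (A :\: B) (M :\: nbhd M B).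
Proof.
move=> hallA BA tightB C; rewrite subsetD => /andP[CA CB].
have := hallA (C :|: B); rewrite subUset CA BA => /(_ isT).
rewrite nbhdD nbhdU cardsU (disjoint_setI0 CB) cards0 subn0 cardsU cardsD tightB.
by have := subset_leq_card (subsetIl (nbhd M C) (nbhd M B)); lia.
Qed.

Lemma hall_cond_slack A M a j : hall_cond A M ->
  (forall B, B \subset A -> B != set0 -> B != A -> #|B| < #|nbhd M B|) ->
  a \in A -> hall_cond (A :\ a) (M :\ j).
Proof.
move=> hallA slackA aA C; rewrite subsetD1 => /andP[CA aC]; rewrite nbhdD cardsD.
have [-> | C0] := eqVneq C set0; first by rewrite cards0.
have CA' : C != A by apply: contraNneq aC => ->.
have := slackA C CA C0 CA'.
by have := subset_leq_card (subsetIr (nbhd M C) [set j]); rewrite cards1; lia.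
Qed.

(* [j0] is only needed to return a function when [A] is empty. *)
Theorem hall_marriage A M (j0 : J) : hall_cond A M -> exists f, matching A M f.
Proof.
have [m ltAm] := ubnP #|A|; elim: m => // m IH in A M ltAm *; move=> hallA.
have [A0 | [a aA]] := set_0Vmem A.
  by exists (fun=> j0); split=> [i ? | i]; rewrite A0 inE.
case: (pickP [pred B : {set I} |
  [&& B \subset A, B != set0, B != A & #|nbhd M B| == #|B|]]) => [B | slack].
- case/and4P=> BA B0 BA' /eqP tightB.
  have ltBA : #|B| < #|A| by rewrite proper_card // properEneq BA' BA.
  have [f fB] : exists f, matching B M f.
    by apply: (IH B); [lia | move=> C CB; apply/hallA/(subset_trans CB)].
  have [g gAB] : exists g, matching (A :\: B) (M :\: nbhd M B) g.
    apply: IH (hall_cond_tight hallA BA tightB).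
    by rewrite cardsDS // -card_gt0 in B0 *; lia.
  exists (fun i => if i \in B then f i else g i).
  exact: matching_glue BA (nbhd_sub M B) (matching_nbhd fB) gAB.
- have slackA B : B \subset A -> B != set0 -> B != A -> #|B| < #|nbhd M B|.
    move=> BA B0 BA'; have := slack B; rewrite /= BA B0 BA' /= => /negbT.
    by rewrite ltn_neqAle (hallA B BA) andbT eq_sym.
  have [j] : exists j, j \in nbhd M [set a].
    by apply/set0Pn; rewrite -card_gt0 (leq_trans _ (hallA _ _)) ?cards1 ?sub1set.
  rewrite inE => /andP[jM /existsP[a' /andP[]]]; rewrite inE => /eqP-> raj.
  have [g gA] : exists g, matching (A :\ a) (M :\ j) g.
    by apply: IH (hall_cond_slack j hallA slackA aA); rewrite (cardsD1 a A) aA in ltAm.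
  exists (fun i => if i \in [set a] then j else g i).
  apply: matching_glue gA; rewrite ?sub1set //.
  by split=> [i i' /set1P-> /set1P-> | i /set1P->]; rewrite ?set11.
Qed.

End HallMarriage.

Local Open Scope ring_scope.

Section Birkhoff.
Variables (R : realFieldType) (n : nat).
Implicit Types (c l : R) (D : 'M[R]_n) (A : 'I_n -> 'I_n -> R) (s : 'S_n).

Definition bistochastic c D : Prop :=
  [/\ forall i j, 0 <= D i j, forall i, \sum_j D i j = c & forall j, \sum_i D i j = c].

Definition transport_cost D A : R := \sum_i \sum_j D i j * A i j.

Definition perm_cost A s : R := \sum_i A i (s i).

Lemma perm_mxE s i j : perm_mx s i j = (s i == j)%:R :> R.
Proof. by rewrite perm_mxEsub !mxE. Qed.

Lemma perm_mx_row_sum s i : \sum_j perm_mx s i j = 1 :> R.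
Proof.
rewrite (bigD1 (s i)) //= big1 => [|j /negbTE]; first by rewrite perm_mxE eqxx addr0.
by rewrite perm_mxE eq_sym => ->.
Qed.

Lemma bistochastic_perm s : bistochastic 1 (perm_mx s).
Proof.
split=> [i j | i | j]; first by rewrite perm_mxE ler0n.
  exact: perm_mx_row_sum.
by rewrite -(perm_mx_row_sum s^-1%g j) -tr_perm_mx; apply: eq_bigr => i _; rewrite !mxE.
Qed.

Lemma bistochasticZ a c D : 0 <= a -> bistochastic c D -> bistochastic (a * c) (a *: D).
Proof.
move=> a0 [D0 rowD colD]; split=> [i j | i | j].
- by rewrite mxE mulr_ge0.
- by rewrite -(rowD i) mulr_sumr; apply: eq_bigr => j _; rewrite mxE.
- by rewrite -(colD j) mulr_sumr; apply: eq_bigr => i _; rewrite mxE.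
Qed.

Lemma bistochasticB c1 c2 D1 D2 : bistochastic c1 D1 -> bistochastic c2 D2 ->
  (forall i j, D2 i j <= D1 i j) -> bistochastic (c1 - c2) (D1 - D2).
Proof.
move=> [_ row1 col1] [_ row2 col2] D21; split=> [i j | i | j].
- by rewrite !mxE subr_ge0.
- by rewrite -(row1 i) -(row2 i) -sumrB; apply: eq_bigr => j _; rewrite !mxE.
- by rewrite -(col1 j) -(col2 j) -sumrB; apply: eq_bigr => i _; rewrite !mxE.
Qed.

Lemma bistochastic_sub_perm c D s l : 0 <= l -> bistochastic c D ->
  (forall i, l <= D i (s i)) -> bistochastic (c - l) (D - l *: perm_mx s).
Proof.
move=> l0 bD lD; have bP := bistochasticZ l0 (bistochastic_perm s).
rewrite mulr1 in bP; apply: (bistochasticB bD bP) => i j.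
rewrite mxE perm_mxE; have [<- | _] := eqVneq (s i) j; first by rewrite mulr1.
by rewrite mulr0; case: bD.
Qed.

Lemma transport_costB D1 D2 A :
  transport_cost (D1 - D2) A = transport_cost D1 A - transport_cost D2 A.
Proof.
rewrite -sumrB; apply: eq_bigr => i _; rewrite -sumrB.
by apply: eq_bigr => j _; rewrite !mxE mulrBl.
Qed.

Lemma transport_costZ a D A : transport_cost (a *: D) A = a * transport_cost D A.
Proof.
rewrite mulr_sumr; apply: eq_bigr => i _; rewrite mulr_sumr.
by apply: eq_bigr => j _; rewrite !mxE mulrA.
Qed.

Lemma transport_cost_perm s A : transport_cost (perm_mx s) A = perm_cost A s.
Proof.
apply: eq_bigr => i _; rewrite (bigD1 (s i)) //= perm_mxE eqxx mul1r big1 ?addr0 //.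
by move=> j /negbTE; rewrite perm_mxE eq_sym => ->; rewrite mul0r.
Qed.

Lemma bistochastic_hall_cond c D : 0 < c -> bistochastic c D ->
  hall_cond (fun i j => 0 < D i j) setT setT.
Proof.
move=> c0 [D0 rowD colD] B _; set N := nbhd _ _ _.
have rowB : \sum_(i in B) \sum_(j in N) D i j = c *+ #|B|.
  rewrite -sumr_const; apply: eq_bigr => i iB.
  rewrite -(rowD i) [RHS](bigID (mem N)) /= [X in _ + X]big1 ?addr0 // => j jN.
  apply/eqP; rewrite eq_le D0 andbT leNgt; apply: contra jN => Dij.
  by rewrite (mem_nbhd iB) ?inE.
have colN : \sum_(i in B) \sum_(j in N) D i j <= c *+ #|N|.
  rewrite exchange_big -sumr_const /=; apply: ler_sum => j _.
  by rewrite -(colD j) [X in _ <= X](bigID (mem B)) /= lerDl sumr_ge0.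
by rewrite -(ler_nat R) -(ler_pM2r c0) !mulr_natl -rowB.
Qed.

Lemma bistochastic_perm_support c D : 0 < c -> bistochastic c D ->
  exists s, forall i, 0 < D i (s i).
Proof.
move=> c0 bD; have [n0 | n_gt0] := leqP n 0.
  by exists 1%g => i; have := ltn_ord i; lia.
have [f [injf fD]] := hall_marriage (Ordinal n_gt0) (bistochastic_hall_cond c0 bD).
have {}injf : injective f by move=> i i'; apply: injf; rewrite inE.
by exists (perm injf) => i; rewrite permE; have [] := fD i (in_setT i).
Qed.

Definition pos_support D : {set 'I_n * 'I_n} := [set ij | 0 < D ij.1 ij.2].

(* Peeling off [l *: perm_mx s], with [l] the least entry of [D] along [s], leaves a
   bistochastic matrix with a smaller positive support. *)
Lemma bistochastic_cost_ge c D A s0 : (forall s, perm_cost A s0 <= perm_cost A s) ->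
  bistochastic c D -> c * perm_cost A s0 <= transport_cost D A.
Proof.
move=> s0_min; have [m ltDm] := ubnP #|pos_support D|.
elim: m => // m IH in c D ltDm *; move=> bD; have [D0 rowD colD] := bD.
case: (pickP [pred ij | 0 < D ij.1 ij.2]) => [[i j] /= Dij | D_0]; last first.
  have {}D_0 i j : D i j = 0.
    by apply/eqP; rewrite eq_le D0 andbT leNgt; move: (D_0 (i, j)) => /= ->.
  rewrite /transport_cost big1 => [|i _]; last first.
    by rewrite big1 // => j _; rewrite D_0 mul0r.
  by rewrite /perm_cost mulr_sumr big1 // => i _; rewrite -(rowD i) big1 ?mul0r // => j _.
have c0 : 0 < c by rewrite -(rowD i) (lt_le_trans Dij) // (bigD1 j) //= lerDl sumr_ge0.
have [s Ds] := bistochastic_perm_support c0 bD.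
have [i0 _ l_min] := Order.TotalTheory.arg_minP (fun i => D i (s i)) (isT : predT i).
set l := D i0 (s i0) in l_min; have l0 : 0 < l := Ds i0.
have bD' := bistochastic_sub_perm (ltW l0) bD (fun i => l_min i isT).
have supp_lt : (#|pos_support (D - l *: perm_mx s)| < m)%N.
  suff : (#|pos_support (D - l *: perm_mx s)| < #|pos_support D|)%N by lia.
  apply: proper_card; apply/properP; split.
    apply/subsetP => -[i' j']; rewrite !inE !mxE /= => /lt_le_trans; apply.
    by rewrite gerBl mulr_ge0 ?ler0n ?ltW.
  by exists (i0, s i0); rewrite !inE /= ?Ds // !mxE eqxx mulr1 subrr ltxx.
have := IH _ _ supp_lt bD'; rewrite transport_costB transport_costZ transport_cost_perm.
by have := ler_wpM2l (ltW l0) (s0_min s); rewrite mulrBl; lra.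
Qed.

End Birkhoff.

Lemma exists_argmin d (T : orderType d) (K : finType) (P : K -> Prop) (F : K -> T) :
  (exists k, P k) -> exists2 k, P k & forall k', P k' -> (F k <= F k')%O.
Proof.
case=> k0 Pk0; have Pbk0 : `[< P k0 >] by apply/asboolP.
have [k /asboolP Pk k_min] :=
  Order.TotalTheory.arg_minP (P := fun k => `[< P k >]) F Pbk0.
by exists k => // k' Pk'; apply/k_min/asboolP.
Qed.

Lemma perm_plan_optimal (R : realFieldType) (n : nat) (K : finType) (P : K -> Prop)
    (M : K -> 'I_n -> 'I_n -> R) (c : R) :
  0 <= c -> (exists k, P k) ->
  exists k (s : 'S_n), P k /\ forall k' D, P k' -> bistochastic c D ->
    transport_cost (c *: perm_mx s) (M k) <= transport_cost D (M k').
Proof.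
move=> c0 [k0 Pk0].
have [[k s] /= Pk ks_min] := exists_argmin (fun ks => perm_cost (M ks.1) ks.2)
  (ex_intro (fun ks : K * 'S_n => P ks.1) (k0, 1%g) Pk0).
exists k, s; split=> // k' D Pk' bD.
have [s' _ s'_min] := Order.TotalTheory.arg_minP (perm_cost (M k')) (isT : predT 1%g).
apply: le_trans _ (bistochastic_cost_ge (fun s => s'_min s isT) bD).
by rewrite transport_costZ transport_cost_perm ler_wpM2l // (ks_min (k', s')).
Qed.

Section Alignments.
Variable R : realType.

(* Admissible alignments are 0/1 matrices, so they range over a finite type. *)
Definition mx_of_bool T T' (b : 'M[bool]_(T, T')) : 'M[R]_(T, T') :=
  map_mx (fun x : bool => x%:R) b.

Lemma admissible_mx_of_bool T T' (pi : 'M[R]_(T, T')) :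
  admissible pi -> mx_of_bool (map_mx (eq_op^~ 1) pi) = pi.
Proof.
case=> p [_ _ pi01]; apply/matrixP => t t'; rewrite !mxE pi01.
by case: ifP; rewrite ?eqxx // eq_sym oner_eq0.
Qed.

Lemma dtw_path_exists (a b : nat) :
  exists2 p, path dtw_step (0, 0)%N p & last (0, 0)%N p = (a, b).
Proof.
elim: a b => [|a IHa] b.
  elim: b => [|b [p p_path p_last]]; first by exists [::].
  exists (rcons p (0, b.+1)%N); rewrite ?rcons_path ?last_rcons ?p_path ?p_last //.
  by rewrite /dtw_step /= !eqxx.
have [p p_path p_last] := IHa b.
exists (rcons p (a.+1, b)); rewrite ?rcons_path ?last_rcons ?p_path ?p_last //.
by rewrite /dtw_step /= !eqxx.
Qed.

Lemma admissible_exists T T' : exists b : 'M[bool]_(T, T'), admissible (mx_of_bool b).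
Proof.
have [p p_path p_last] := dtw_path_exists T.-1 T'.-1.
exists (\matrix_(t, t') (((t : nat), (t' : nat)) \in (0, 0)%N :: p)).
by exists p; split=> // t t'; rewrite !mxE; case: ifP.
Qed.

End Alignments.

Lemma unif_perm_coupling (R : realType) (n : nat) (s : 'S_n) :
  coupling (@unif R n) (@unif R n) (n%:R^-1 *: perm_mx s).
Proof.
have n_inv_ge0 : 0 <= n%:R^-1 :> R by rewrite invr_ge0 ler0n.
by have := bistochasticZ n_inv_ge0 (bistochastic_perm R s); rewrite mulr1.
Qed.

Lemma cmad_perm_optimum (R : realType) (n T T' q : nat) (hn : (0 < n)%N)
    (X : 'I_n -> 'I_T -> 'I_q -> R) (X' : 'I_n -> 'I_T' -> 'I_q -> R)
    (C : finType) (Y : 'I_n -> C) :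
  exists (g : 'M[R]_n) (Pi : C -> 'M[R]_(T, T')),
    [/\ coupling (@unif R n) (@unif R n) g,
        (forall c, admissible (Pi c)),
        (exists s : 'S_n, n%:R *: g = perm_mx s) &
        forall (g' : 'M[R]_n) (Pi' : C -> 'M[R]_(T, T')),
          coupling (@unif R n) (@unif R n) g' -> (forall c, admissible (Pi' c)) ->
          cmad_cost X X' Y g Pi <= cmad_cost X X' Y g' Pi'].
Proof.
pose M (B : {ffun C -> 'M[bool]_(T, T')}) i j :=
  \sum_(t < T) \sum_(t' < T') Lcost X X' i j t t' * mx_of_bool R (B (Y i)) t t'.
have [b0 b0_adm] := admissible_exists R T T'.
have n_inv_ge0 : 0 <= n%:R^-1 :> R by rewrite invr_ge0 ler0n.
have [|B [s [B_adm B_opt]]] := @perm_plan_optimal R n _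
  (fun B : {ffun C -> 'M[bool]_(T, T')} => forall c, admissible (mx_of_bool R (B c)))
  M n%:R^-1 n_inv_ge0.
  by exists [ffun=> b0] => c; rewrite ffunE.
exists (n%:R^-1 *: perm_mx s), (fun c => mx_of_bool R (B c)); split=> //.
- exact: unif_perm_coupling.
- by exists s; rewrite scalerA mulfV ?scale1r // pnatr_eq0 -lt0n.
move=> g' Pi' g'_coupling Pi'_adm.
pose B' := [ffun c => map_mx (eq_op^~ 1) (Pi' c)].
have B'E c : mx_of_bool R (B' c) = Pi' c by rewrite ffunE admissible_mx_of_bool.
have -> : cmad_cost X X' Y g' Pi' = transport_cost g' (M B').
  by apply: eq_bigr => i _; apply: eq_bigr => j _; rewrite /M B'E.
by apply: B_opt g'_coupling => c; rewrite B'E.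
Qed.

Theorem mainTheorem2 (R : realType) (n T T' q : nat)
  (hn : (0 < n)%N) (hT : (0 < T)%N) (hT' : (0 < T')%N)
  (X : 'I_n -> 'I_T -> 'I_q -> R) (X' : 'I_n -> 'I_T' -> 'I_q -> R) :
  (exists (g : 'M[R]_n) (pi : 'M[R]_(T, T')),
     [/\ coupling (@unif R n) (@unif R n) g,
         admissible pi,
         (exists s : 'S_n, n%:R *: g = perm_mx s) &
         forall (g' : 'M[R]_n) (pi' : 'M[R]_(T, T')),
           coupling (@unif R n) (@unif R n) g' -> admissible pi' ->
           mad_cost X X' g pi <= mad_cost X X' g' pi'])
  /\
  (forall (C : finType) (Y : 'I_n -> C),
   exists (g : 'M[R]_n) (Pi : C -> 'M[R]_(T, T')),
     [/\ coupling (@unif R n) (@unif R n) g,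
         (forall c, admissible (Pi c)),
         (exists s : 'S_n, n%:R *: g = perm_mx s) &
         forall (g' : 'M[R]_n) (Pi' : C -> 'M[R]_(T, T')),
           coupling (@unif R n) (@unif R n) g' -> (forall c, admissible (Pi' c)) ->
           cmad_cost X X' Y g Pi <= cmad_cost X X' Y g' Pi']).
Proof.
split=> [|C Y]; last exact: cmad_perm_optimum.
have [g [Pi [g_coupling Pi_adm g_perm g_opt]]] :=
  cmad_perm_optimum hn X X' (fun _ => tt).
exists g, (Pi tt); split=> // g' pi' g'_coupling pi'_adm.
exact: g_opt g' (fun=> pi') g'_coupling (fun=> pi'_adm).
Qed.
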